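(* Let $k\ge 0$. For every $k$-essential multicontext $C$ there is a $k$-correct multicontext $C'$ equivalent to $C$.
   Context: Let $\Sigma$ be a finite alphabet, $1\notin\Sigma$ a separator, $\Sigma_1=\Sigma\cup\{1\}$, $\mathrm{rk}(w)=|w|_1$ for $w\in\Sigma_1^*$; for $\mathrm{rk}(u)\ge j$, $u\odot_j v$ replaces the $j$-th occurrence of $1$ in $u$ by $v$; these operations extend elementwise to sets of words. Let $N$ be a set of nonterminals, each with a rank in $\mathbb{N}$, and let there be countably many variables of each rank. Multicontexts (with ranks) are built from nonterminals and variables (their rank), words of $\Sigma^*$ (rank $0$) and $1$ (rank $1$) by $(\alpha\cdot\beta)$ of rank $\mathrm{rk}\alpha+\mathrm{rk}\beta$ and $(\alpha\odot_j\beta)$, $j\ge1$, allowed when $\mathrm{rk}\alpha\ge j$, of rank $\mathrm{rk}\alpha+\mathrm{rk}\beta-1$. Submulticontexts are the subterms (nodes of the syntactic tree). A multicontext is $k$-correct if every submulticontext has rank at most $k$; it is $k$-essential if its own rank and the ranks of all variables and nonterminals occurring in it are less than $k$. A multicontext is ground if it contains no nonterminals. Two ground multicontexts with variables $x_1,\dots,x_t$ are equivalent if for every valuation $\mu$ assigning to each variable of rank $r$ a set of words of $\Sigma_1^*$ of rank $r$, their values (interpreting $\cdot$ as concatenation and $\odot_j$ as intercalation, elementwise on sets) coincide. Two arbitrary multicontexts $\alpha_1,\alpha_2$ are equivalent if $\alpha_1=D_1[A_1,\dots,A_s]$ and $\alpha_2=D_2[A_1,\dots,A_s]$ for some nonterminals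 $A_1,\dots,A_s$ and some equivalent ground multicontexts $D_1,D_2$ (where $D[A_1,\dots,A_s]$ means substituting $A_i$ for the $i$-th of $s$ fresh variables). *)

From mathcomp Require Import all_boot.
Set Implicit Arguments.
Unset Strict Implicit.
Unset Printing Implicit Defensive.

(* Alphabet Sigma_1 = option S, with None playing the role of the separator 1. *)
Definition word (S : Type) := seq (option S).

Definition wrk (S : eqType) (w : word S) : nat := count_mem None w.

(* u (.)_j v : replace the j-th (j >= 1) occurrence of 1 in u by v *)
Fixpoint wins (S : Type) (j : nat) (u v : word S) : word S :=
  match u with
  | [::] => [::]
  | None :: u' => if j == 1 then v ++ u' else None :: wins j.-1 u' v
  | Some a :: u' => Some a :: wins j u' v
  end.

(* Variables are pairs (r, i): the i-th variable of rank r. *)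
Definition var := (nat * nat)%type.

Inductive mc (S N : Type) : Type :=
| MNt of N
| MVar of var
| MWord of seq S
| MOne
| MCat of mc S N & mc S N
| MIns of nat & mc S N & mc S N.   (* MIns j a b = (a (.)_j b) *)

Arguments MNt {S N}.
Arguments MVar {S N}.
Arguments MWord {S N}.
Arguments MOne {S N}.
Arguments MCat {S N}.
Arguments MIns {S N}.

Section MC.
Variables (S N : Type) (rkN : N -> nat).

Fixpoint mrk (t : mc S N) : nat :=
  match t with
  | MNt A => rkN A
  | MVar x => x.1
  | MWord _ => 0
  | MOne => 1
  | MCat a b => mrk a + mrk b
  | MIns _ a b => mrk a + mrk b - 1
  end.

Fixpoint mwf (t : mc S N) : Prop :=
  match t with
  | MCat a b => mwf a /\ mwf b
  | MIns j a b => 1 <= j /\ j <= mrk a /\ mwf a /\ mwf b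
  | _ => True
  end.

Fixpoint mcorrect (k : nat) (t : mc S N) : Prop :=
  mrk t <= k /\
  match t with
  | MCat a b => mcorrect k a /\ mcorrect k b
  | MIns _ a b => mcorrect k a /\ mcorrect k b
  | _ => True
  end.

Fixpoint leaves_lt (k : nat) (t : mc S N) : Prop :=
  match t with
  | MNt A => rkN A < k
  | MVar x => x.1 < k
  | MCat a b => leaves_lt k a /\ leaves_lt k b
  | MIns _ a b => leaves_lt k a /\ leaves_lt k b
  | _ => True
  end.

Definition messential (k : nat) (t : mc S N) : Prop :=
  mrk t < k /\ leaves_lt k t.

Fixpoint mground (t : mc S N) : Prop :=
  match t with
  | MNt _ => False
  | MCat a b => mground a /\ mground b
  | MIns _ a b => mground a /\ mground b
  | _ => True
  end.

Fixpoint msubst (sg : var -> option N) (t : mc S N) : mc S N :=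
  match t with
  | MVar x => match sg x with Some A => MNt A | None => MVar x end
  | MCat a b => MCat (msubst sg a) (msubst sg b)
  | MIns j a b => MIns j (msubst sg a) (msubst sg b)
  | t => t
  end.

Fixpoint meval (mu : var -> word S -> Prop) (t : mc S N) : word S -> Prop :=
  match t with
  | MNt _ => fun _ => False
  | MVar x => mu x
  | MWord w => fun u => u = map Some w
  | MOne => fun u => u = [:: None]
  | MCat a b => fun u => exists v w, meval mu a v /\ meval mu b w /\ u = v ++ w
  | MIns j a b => fun u => exists v w, meval mu a v /\ meval mu b w /\ u = wins j v w
  end.

End MC.

Definition valuation_ok (S : eqType) (mu : var -> word S -> Prop) : Prop :=
  forall x w, mu x w -> wrk w = x.1.

Definition gequiv (S : eqType) (N : Type) (D1 D2 : mc S N) : Prop :=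
  forall mu : var -> word S -> Prop, valuation_ok mu ->
    forall u, meval mu D1 u <-> meval mu D2 u.

(* equivalence of arbitrary multicontexts: a1 = D1[A..], a2 = D2[A..] where the
   substituted (fresh) variables are replaced by nonterminals of the same rank *)
Definition mequiv (S : eqType) (N : Type) (rkN : N -> nat) (a1 a2 : mc S N) : Prop :=
  exists (sg : var -> option N) (D1 D2 : mc S N),
    (forall x A, sg x = Some A -> x.1 = rkN A) /\
    mground D1 /\ mground D2 /\ mwf rkN D1 /\ mwf rkN D2 /\
    gequiv D1 D2 /\ a1 = msubst sg D1 /\ a2 = msubst sg D2.

From mathcomp Require Import all_boot zify.
Set Implicit Arguments. Unset Strict Implicit. Unset Printing Implicit Defensive.

(* An intercalation [a (.)_j b] can only have a submulticontext of rank larger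
   than its own when [b] has rank 0.  Such a rank-0 argument is pushed down
   through [a], using the associativity and commutation laws of concatenation
   and intercalation, to the [j]-th occurrence of [1]: it either replaces a
   literal [1], or it stays attached to a variable or nonterminal, and then the
   receiving subterm has rank below [k] because [C] is [k]-essential.  In the
   resulting normal form every submulticontext therefore has rank at most [k].
   Normalization commutes with substituting nonterminals for variables, so the
   equivalence is checked on the ground multicontext in which every nonterminal
   is replaced by a fresh variable of the same rank. *)

Section Words.
Variable S : eqType.
Implicit Types u v w x y z p q : word S.

Lemma wrk_cat u v : wrk (u ++ v) = wrk u + wrk v.
Proof. by rewrite /wrk count_cat. Qed.

Lemma wrk_None u : wrk (None :: u) = (wrk u).+1.
Proof. by rewrite /wrk /= add1n. Qed.

Lemma wrk_Some a u : wrk (Some a :: u) = wrk u.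
Proof. by []. Qed.

Lemma wrk_map_Some (s : seq S) : wrk (map Some s) = 0.
Proof. by elim: s. Qed.

Lemma wins0 u v : wins 0 u v = u.
Proof. by elim: u => //= [[a|]] u ->. Qed.

Lemma wins_cat j u1 u2 v : wins j (u1 ++ u2) v =
  if j <= wrk u1 then wins j u1 v ++ u2 else u1 ++ wins (j - wrk u1) u2 v.
Proof.
elim: u1 j => [|[a|] u1 IH] j /=.
- by case: j => [|j]; rewrite ?wins0.
- by rewrite add0n IH; case: ifP.
- rewrite add1n; case: j => [|[|j]] /=; rewrite ?wins0 ?catA //.
  by rewrite IH ltnS subSS; case: ifP.
Qed.

Lemma wrk_split j u : 0 < j <= wrk u ->
  exists p q, u = p ++ None :: q /\ wrk p = j.-1.
Proof.
elim: u j => [|[a|] u IH] j.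
- by rewrite /wrk /=; lia.
- by rewrite wrk_Some => /IH [p [q [-> Hp]]]; exists (Some a :: p), q.
- rewrite wrk_None; case: j => [|[|j]] //= Hj; first by exists [::], u.
  have /IH [p [q [-> Hp]]] : 0 < j.+1 <= wrk u by lia.
  by exists (None :: p), q; rewrite wrk_None Hp.
Qed.

Lemma wins_hole p q v : wins (wrk p).+1 (p ++ None :: q) v = p ++ v ++ q.
Proof. by rewrite wins_cat ltnn subSnn. Qed.

Lemma wrk_wins j u v : 0 < j <= wrk u -> wrk (wins j u v) = wrk u + wrk v - 1.
Proof.
move=> Hj; have [p [q [Eu Hp]]] := wrk_split Hj; subst u.
have -> : j = (wrk p).+1 by move: Hj; rewrite wrk_cat wrk_None; lia.
by rewrite wins_hole !wrk_cat wrk_None; lia.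
Qed.

Lemma wins_wins_before i j x y z : 0 < j < i -> i <= wrk x ->
  wins (i + wrk z).-1 (wins j x z) y = wins j (wins i x y) z.
Proof.
move=> ji ix; have /wrk_split [p [q [-> Hp]]] : 0 < i <= wrk x by lia.
have -> : i = (wrk p).+1 by lia.
have L : j <= wrk p by lia.
rewrite wins_hole (wins_cat j p (None :: q)) (wins_cat j p (y ++ q)) L.
have -> : ((wrk p).+1 + wrk z).-1 = (wrk (wins j p z)).+1 by rewrite wrk_wins; lia.
by rewrite wins_hole.
Qed.

Lemma wins_wins_inside i j x y z : 0 < i <= j -> j < i + wrk y -> i <= wrk x ->
  wins i x (wins (j - i).+1 y z) = wins j (wins i x y) z.
Proof.
move=> ij jy ix; have /wrk_split [p [q [-> Hp]]] : 0 < i <= wrk x by lia.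
have -> : i = (wrk p).+1 by lia.
rewrite !wins_hole wins_cat ifF; last lia.
rewrite wins_cat ifT; last lia.
by do 3 f_equal; lia.
Qed.

Lemma wins_wins_after i j x y z : 0 < i <= wrk x -> i + wrk y <= j ->
  wins i (wins (j - wrk y).+1 x z) y = wins j (wins i x y) z.
Proof.
move=> ix jy; have /wrk_split [p [q [-> Hp]]] := ix.
have -> : i = (wrk p).+1 by lia.
have -> : wins (j - wrk y).+1 (p ++ None :: q) z =
          p ++ None :: wins (j - wrk y - wrk p) q z.
  rewrite wins_cat ifF; last lia.
  have -> : (j - wrk y).+1 - wrk p = (j - wrk y - wrk p).+1 by lia.
  by case E: (j - wrk y - wrk p) => [|m]; first lia.
rewrite !wins_hole wins_cat ifF; last lia.
by rewrite wins_cat ifF; [do 3 f_equal; lia | lia].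
Qed.

End Words.

Section Multicontexts.
Variables (S : eqType) (N : Type) (rkN : N -> nat).
Local Notation mc := (mc S N).
Local Notation rk := (mrk rkN).
Local Notation wf := (mwf rkN).

Fixpoint chain (t : mc) : bool :=
  match t with
  | MNt _ | MVar _ => true
  | MIns _ c b => chain c && (rk b == 0)
  | _ => false
  end.

(* [push j a b] is equivalent to [MIns j a b] when [rk b = 0].  When [b] lands
   inside an [a2] of rank 1, the result has rank 0 and is pushed on into [a1]. *)
Fixpoint push (j : nat) (a b : mc) {struct a} : mc :=
  match a with
  | MOne => b
  | MCat a1 a2 => if j <= rk a1 then MCat (push j a1 b) a2
                  else MCat a1 (push (j - rk a1) a2 b)
  | MIns i a1 a2 =>
      if chain a then MIns j a b
      else if j < i then MIns i.-1 (push j a1 b) a2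
      else if j < i + rk a2 then
        (if rk a2 == 1 then push i a1 (push (j - i).+1 a2 b)
         else MIns i a1 (push (j - i).+1 a2 b))
      else MIns i (push (j - rk a2).+1 a1 b) a2
  | _ => MIns j a b
  end.

Fixpoint normalize (t : mc) : mc :=
  match t with
  | MCat a b => MCat (normalize a) (normalize b)
  | MIns j a b => if rk (normalize b) == 0 then push j (normalize a) (normalize b)
                  else MIns j (normalize a) (normalize b)
  | t => t
  end.

Fixpoint normal (t : mc) : Prop :=
  match t with
  | MCat a b => normal a /\ normal b
  | MIns _ a b => [/\ normal a, normal b & 0 < rk b \/ chain a]
  | _ => True
  end.

Lemma push_rk j a b : wf a -> 0 < j <= rk a -> rk b = 0 -> rk (push j a b) = (rk a).-1.
Proof.
elim: a j b => [A|x|w||a1 IH1 a2 IH2|i a1 IH1 a2 IH2] j b /=; try lia.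
- move=> [W1 W2] Hj b0; case: ifP => H /=; [rewrite IH1 | rewrite IH2] => //; lia.
- move=> [i0 [ia [W1 W2]]] Hj b0.
  case: ifP => Hc /=; first lia.
  case: ifP => H1 /=; first (rewrite IH1 //; lia).
  case: ifP => H2 /=; last (rewrite IH1 //; lia).
  case: ifP => H3 /=; last (rewrite IH2 //; lia).
  rewrite IH1 //; try lia; rewrite IH2 //; lia.
Qed.

Lemma push_wf j a b : wf a -> wf b -> 0 < j <= rk a -> rk b = 0 -> wf (push j a b).
Proof.
elim: a j b => [A|x|w||a1 IH1 a2 IH2|i a1 IH1 a2 IH2] j b /=; try lia.
- by move=> Wb Hj b0; repeat split => //; lia.
- by move=> Wb Hj b0; repeat split => //; lia.
- by move=> _ Wb.
- move=> [W1 W2] Wb Hj b0; case: ifP => H /=; split => //; [apply: IH1 | apply: IH2] => //; lia.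
- move=> [i0 [ia [W1 W2]]] Wb Hj b0.
  case: ifP => Hc /=; first by repeat split => //; lia.
  case: ifP => H1 /=.
    by rewrite push_rk //; repeat split => //; try lia; apply: IH1 => //; lia.
  case: ifP => H2 /=; last first.
    by rewrite push_rk //; repeat split => //; try lia; apply: IH1 => //; lia.
  have W2' : wf (push (j - i).+1 a2 b) by apply: IH2 => //; lia.
  case: ifP => H3 /=; last by repeat split => //; lia.
  by apply: IH1 => //; [lia | rewrite push_rk //; lia].
Qed.

Lemma push_normal j a b :
  wf a -> normal a -> normal b -> 0 < j <= rk a -> rk b = 0 -> normal (push j a b).
Proof.
elim: a j b => [A|x|w||a1 IH1 a2 IH2|i a1 IH1 a2 IH2] j b //=; try lia.
- by move=> _ _ Nb; split => //; right.
- by move=> _ _ Nb; split => //; right.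
- move=> [W1 W2] [N1 N2] Nb Hj b0; case: ifP => H /=; split => //;
    [apply: IH1 | apply: IH2] => //; lia.
- move=> [i0 [ia [W1 W2]]] [N1 N2 Nc] Nb Hj b0.
  case: ifP => Hc /=; first by split => //; right.
  have r2 : 0 < rk a2 by case: Nc => // c1; move: Hc; rewrite c1 /=; lia.
  case: ifP => H1 /=; first by split => //; [apply: IH1 => //; lia | left].
  case: ifP => H2 /=; last by split => //; [apply: IH1 => //; lia | left].
  have N2' : normal (push (j - i).+1 a2 b) by apply: IH2 => //; lia.
  case: ifP => H3 /=; last by split => //; left; rewrite push_rk //; lia.
  by apply: IH1 => //; [lia | rewrite push_rk //; lia].
Qed.

Lemma chain_rk k a : chain a -> leaves_lt rkN k a -> rk a < k.
Proof.
elim: a => //= i a1 IH1 a2 _ /andP [c1 /eqP r2] [L1 _].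
by have := IH1 c1 L1; lia.
Qed.

Lemma normal_correct k t :
  wf t -> normal t -> leaves_lt rkN k t -> rk t <= k -> mcorrect rkN k t.
Proof.
elim: t => [A|x|w||a IHa b IHb|j a IHa b IHb] //=.
- move=> [Wa Wb] [Na Nb] [La Lb] H.
  by split => //; split; [apply: IHa | apply: IHb] => //; lia.
- move=> [j0 [ja [Wa Wb]]] [Na Nb Nc] [La Lb] H.
  split => //; split; [apply: IHa | apply: IHb] => //; try lia.
  by case: Nc => [|/chain_rk/(_ La)]; lia.
Qed.

Lemma normalize_rk_wf t : wf t -> rk (normalize t) = rk t /\ wf (normalize t).
Proof.
elim: t => //= [a IHa b IHb|j a IHa b IHb].
- by move=> [/IHa [-> ?] /IHb [-> ?]].
- move=> [j0 [ja [/IHa [Ra Wa] /IHb [Rb Wb]]]].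
  case: ifP => /eqP H.
  + by split; [rewrite push_rk //; lia | apply: push_wf => //; lia].
  + by rewrite /= Ra Rb; repeat split => //; lia.
Qed.

Lemma normalize_normal t : wf t -> normal (normalize t).
Proof.
elim: t => //= [a IHa b IHb|j a IHa b IHb].
- by move=> [/IHa ? /IHb ?].
- move=> [j0 [ja [Wa Wb]]].
  have [Ra Wa'] := normalize_rk_wf Wa; have [Rb Wb'] := normalize_rk_wf Wb.
  case: ifP => /eqP H; first by apply: push_normal => //; auto; lia.
  by split; auto; left; lia.
Qed.

Section ComponentwisePredicate.
Variable P : mc -> Prop.
Hypothesis P_cat : forall a b, P (MCat a b) <-> P a /\ P b.
Hypothesis P_ins : forall j a b, P (MIns j a b) <-> P a /\ P b.

Lemma push_pred j a b : P a -> P b -> P (push j a b).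
Proof.
elim: a j b => [A|x|w||a1 IH1 a2 IH2|i a1 IH1 a2 IH2] j b /= Pa Pb //;
  try by apply/P_ins.
- by move/P_cat: Pa => [P1 P2]; case: ifP => _; apply/P_cat; auto.
- move/P_ins: (Pa) => [P1 P2].
  by repeat case: ifP => _; rewrite ?P_ins; auto.
Qed.

Lemma normalize_pred t : P t -> P (normalize t).
Proof.
elim: t => //= [a IHa b IHb|j a IHa b IHb].
- by move/P_cat=> [Pa Pb]; apply/P_cat; auto.
- by move/P_ins=> [Pa Pb]; case: ifP => _; [apply: push_pred | apply/P_ins]; auto.
Qed.

End ComponentwisePredicate.

Section Semantics.
Variable mu : var -> word S -> Prop.
Hypothesis mu_ok : valuation_ok mu.
Local Notation E := (meval mu).

Definition meq (t t' : mc) : Prop := forall u, E t u <-> E t' u.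

Lemma meq_refl t : meq t t.
Proof. by []. Qed.

Lemma meq_trans t1 t2 t3 : meq t1 t2 -> meq t2 t3 -> meq t1 t3.
Proof. by move=> H12 H23 u; rewrite H12. Qed.

Lemma meq_cat a a' b b' : meq a a' -> meq b b' -> meq (MCat a b) (MCat a' b').
Proof.
by move=> Ha Hb u; split=> -[v [w [/Ha Hv [/Hb Hw ->]]]]; exists v, w.
Qed.

Lemma meq_ins j a a' b b' : meq a a' -> meq b b' -> meq (MIns j a b) (MIns j a' b').
Proof. by move=> Ha Hb u; split=> -[v [w [/Ha Hv [/Hb Hw ->]]]]; exists v, w. Qed.

Lemma meval_wrk t w : wf t -> E t w -> wrk w = rk t.
Proof.
elim: t w => [A|x|s||a IHa b IHb|j a IHa b IHb] w //=.
- by move=> _ /mu_ok.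
- by move=> _ ->; rewrite wrk_map_Some.
- by move=> _ ->.
- by move=> [Wa Wb] [v [z [Hv [Hz ->]]]]; rewrite wrk_cat (IHa v) // (IHb z).
- move=> [j0 [ja [Wa Wb]]] [v [z [Hv [Hz ->]]]].
  by rewrite wrk_wins (IHa v) // ?(IHb z) //; lia.
Qed.

Lemma meq_ins_one b : meq (MIns 1 MOne b) b.
Proof.
move=> u; split; first by move=> [_ [w [-> [Hw ->]]]]; rewrite /= cats0.
by move=> Hu; exists [:: None], u; rewrite /= cats0.
Qed.

Lemma meq_ins_catl j a1 a2 b : wf a1 -> j <= rk a1 ->
  meq (MIns j (MCat a1 a2) b) (MCat (MIns j a1 b) a2).
Proof.
move=> W1 H u; split.
- move=> [v [z [[x [y [Hx [Hy ->]]]] [Hz ->]]]].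
  exists (wins j x z), y; split; first by exists x, z.
  by rewrite wins_cat (meval_wrk W1 Hx) H.
- move=> [v [y [[x [z [Hx [Hz ->]]]] [Hy ->]]]].
  exists (x ++ y), z; split; first by exists x, y.
  by rewrite wins_cat (meval_wrk W1 Hx) H.
Qed.

Lemma meq_ins_catr j a1 a2 b : wf a1 -> rk a1 < j ->
  meq (MIns j (MCat a1 a2) b) (MCat a1 (MIns (j - rk a1) a2 b)).
Proof.
move=> W1 H u; have H' : (j <= rk a1) = false by lia.
split.
- move=> [v [z [[x [y [Hx [Hy ->]]]] [Hz ->]]]].
  exists x, (wins (j - rk a1) y z); split => //; split; first by exists y, z.
  by rewrite wins_cat (meval_wrk W1 Hx) H'.
- move=> [x [v [Hx [[y [z [Hy [Hz ->]]]] ->]]]].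
  exists (x ++ y), z; split; first by exists x, y.
  by rewrite wins_cat (meval_wrk W1 Hx) H'.
Qed.

Lemma meq_ins_ins_before i j a1 a2 b : wf a1 -> wf b -> 0 < j < i -> i <= rk a1 ->
  meq (MIns j (MIns i a1 a2) b) (MIns (i + rk b).-1 (MIns j a1 b) a2).
Proof.
move=> W1 Wb ji ia u; split.
- move=> [v [z [[x [y [Hx [Hy ->]]]] [Hz ->]]]].
  exists (wins j x z), y; split; first by exists x, z.
  by rewrite -(meval_wrk Wb Hz) wins_wins_before // (meval_wrk W1 Hx).
- move=> [v [y [[x [z [Hx [Hz ->]]]] [Hy ->]]]].
  exists (wins i x y), z; split; first by exists x, y.
  by rewrite -(meval_wrk Wb Hz) wins_wins_before // (meval_wrk W1 Hx).
Qed.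

Lemma meq_ins_ins_inside i j a1 a2 b : wf a1 -> wf a2 ->
  0 < i <= j -> j < i + rk a2 -> i <= rk a1 ->
  meq (MIns j (MIns i a1 a2) b) (MIns i a1 (MIns (j - i).+1 a2 b)).
Proof.
move=> W1 W2 ij ja ia u; split.
- move=> [v [z [[x [y [Hx [Hy ->]]]] [Hz ->]]]].
  exists x, (wins (j - i).+1 y z); split => //; split; first by exists y, z.
  by rewrite wins_wins_inside // (meval_wrk W1 Hx, meval_wrk W2 Hy).
- move=> [x [v [Hx [[y [z [Hy [Hz ->]]]] ->]]]].
  exists (wins i x y), z; split; first by exists x, y.
  by rewrite wins_wins_inside // (meval_wrk W1 Hx, meval_wrk W2 Hy).
Qed.

Lemma meq_ins_ins_after i j a1 a2 b : wf a1 -> wf a2 ->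
  0 < i <= rk a1 -> i + rk a2 <= j ->
  meq (MIns j (MIns i a1 a2) b) (MIns i (MIns (j - rk a2).+1 a1 b) a2).
Proof.
move=> W1 W2 ia ja u; split.
- move=> [v [z [[x [y [Hx [Hy ->]]]] [Hz ->]]]].
  exists (wins (j - rk a2).+1 x z), y; split; first by exists x, z.
  by rewrite -(meval_wrk W2 Hy) wins_wins_after // (meval_wrk W1 Hx, meval_wrk W2 Hy).
- move=> [v [y [[x [z [Hx [Hz ->]]]] [Hy ->]]]].
  exists (wins i x y), z; split; first by exists x, y.
  by rewrite -(meval_wrk W2 Hy) wins_wins_after // (meval_wrk W1 Hx, meval_wrk W2 Hy).
Qed.

Lemma push_meq j a b : wf a -> wf b -> 0 < j <= rk a -> rk b = 0 ->
  meq (MIns j a b) (push j a b).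
Proof.
elim: a j b => [A|x|s||a1 IH1 a2 IH2|i a1 IH1 a2 IH2] j b //= Wa Wb Hj b0; try lia.
- have -> : j = 1 by lia.
  exact: meq_ins_one.
- case: Wa => W1 W2; case: ifP => H.
  + apply: meq_trans (meq_ins_catl a2 b W1 H) (meq_cat _ (meq_refl _)).
    by apply: IH1 => //; lia.
  + have H' : rk a1 < j by lia.
    apply: meq_trans (meq_ins_catr a2 b W1 H') (meq_cat (meq_refl _) _).
    by apply: IH2 => //; lia.
- case: Wa => [i0 [ia [W1 W2]]].
  case: ifP => _; first exact: meq_refl.
  case: ifP => H1.
    apply: meq_trans (meq_ins_ins_before a2 W1 Wb _ ia) _; first lia.
    by rewrite b0 addn0; apply: meq_ins (meq_refl _); apply: IH1 => //; lia.
  case: ifP => H2; last first.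
    apply: meq_trans (meq_ins_ins_after b W1 W2 _ _) _; try lia.
    by apply: meq_ins (meq_refl _); apply: IH1 => //; lia.
  have R2 : 0 < (j - i).+1 <= rk a2 by lia.
  apply: meq_trans (meq_ins_ins_inside b W1 W2 _ _ ia) _; try lia.
  apply: meq_trans (meq_ins i (meq_refl _) (IH2 _ _ W2 Wb R2 b0)) _.
  case: ifP => H3; last exact: meq_refl.
  apply: IH1 => //; [exact: push_wf | lia | by rewrite push_rk //; lia].
Qed.

Lemma normalize_meq t : wf t -> meq t (normalize t).
Proof.
elim: t => //= [a IHa b IHb|j a IHa b IHb].
- by move=> [/IHa Ha /IHb Hb]; apply: meq_cat.
- move=> [j0 [ja [Wa Wb]]].
  have [Ra Wa'] := normalize_rk_wf Wa; have [Rb Wb'] := normalize_rk_wf Wb.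
  apply: meq_trans (meq_ins j (IHa Wa) (IHb Wb)) _.
  case: ifP => /eqP H; last exact: meq_refl.
  by apply: push_meq => //; lia.
Qed.

End Semantics.

Section Substitution.
Variable sg : var -> option N.
Hypothesis sg_rk : forall x A, sg x = Some A -> x.1 = rkN A.

Lemma rk_subst (t : mc) : rk (msubst sg t) = rk t.
Proof.
elim: t => //= [x|a -> b ->|j a -> b ->] //.
by case E: (sg x) => [A|] //=; rewrite (sg_rk E).
Qed.

Lemma chain_subst (t : mc) : chain (msubst sg t) = chain t.
Proof.
elim: t => //= [x|j a -> b _]; first by case: (sg x).
by rewrite rk_subst.
Qed.

Lemma push_subst j (a b : mc) : msubst sg (push j a b) = push j (msubst sg a) (msubst sg b).
Proof.
elim: a j b => [A|x|s||a1 IH1 a2 IH2|i a1 IH1 a2 IH2] j b //=.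
- by case: (sg x).
- by rewrite rk_subst; case: ifP => _ /=; rewrite ?IH1 ?IH2.
- rewrite chain_subst rk_subst; case: ifP => _ //.
  by repeat case: ifP => _ /=; rewrite ?IH1 ?IH2.
Qed.

Lemma normalize_subst (t : mc) : msubst sg (normalize t) = normalize (msubst sg t).
Proof.
elim: t => //= [x|a -> b ->|j a IHa b IHb] //.
- by case: (sg x).
- rewrite -IHb rk_subst; case: ifP => _; last by rewrite /= IHa IHb.
  by rewrite push_subst IHa IHb.
Qed.

End Substitution.

Fixpoint nonterminals (t : mc) : seq N :=
  match t with
  | MNt A => [:: A]
  | MCat a b | MIns _ a b => nonterminals a ++ nonterminals b
  | _ => [::]
  end.

Fixpoint abstract (t : mc) (n : nat) : mc :=
  match t with
  | MNt A => MVar (rkN A, n)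
  | MCat a b => MCat (abstract a n) (abstract b (n + size (nonterminals a)))
  | MIns j a b => MIns j (abstract a n) (abstract b (n + size (nonterminals a)))
  | t => t
  end.

Fixpoint max_var_index (t : mc) : nat :=
  match t with
  | MVar x => x.2
  | MCat a b | MIns _ a b => maxn (max_var_index a) (max_var_index b)
  | _ => 0
  end.

Lemma abstract_rk t n : rk (abstract t n) = rk t.
Proof. by elim: t n => //= [a IHa b IHb|j a IHa b IHb] n; rewrite IHa IHb. Qed.

Lemma abstract_wf t n : wf t -> wf (abstract t n).
Proof.
elim: t n => //= [a IHa b IHb|j a IHa b IHb] n.
- by move=> [? ?]; split; auto.
- by rewrite abstract_rk => -[? [? [? ?]]]; repeat split; auto.
Qed.

Lemma abstract_ground t n : mground (abstract t n).
Proof. by elim: t n => //= [a IHa b IHb|j a IHa b IHb] n; split. Qed.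

Lemma msubst_abstract (sg : var -> option N) t n :
  (forall p A, onth (nonterminals t) p = Some A -> sg (rkN A, n + p) = Some A) ->
  (forall x, x.2 <= max_var_index t -> sg x = None) ->
  msubst sg (abstract t n) = t.
Proof.
have split_hyps a b n' : (forall p A, onth (nonterminals a ++ nonterminals b) p = Some A ->
      sg (rkN A, n' + p) = Some A) ->
    (forall p A, onth (nonterminals a) p = Some A -> sg (rkN A, n' + p) = Some A) /\
    (forall p A, onth (nonterminals b) p = Some A ->
      sg (rkN A, n' + size (nonterminals a) + p) = Some A).
  move=> H; split=> p A Hp; rewrite ?onth_cat in H; [apply: H | rewrite -addnA; apply: H].
  - by rewrite onth_cat -onthTE Hp.
  - by rewrite onth_cat ltnNge leq_addr /= addKn.
elim: t n => [A|x|s||a IHa b IHb|j a IHa b IHb] n //= Hnt Hvar.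
- by rewrite -(addn0 n) (Hnt 0 A).
- by rewrite Hvar.
- have [Ha Hb] := split_hyps a b n Hnt.
  by rewrite IHa ?IHb // => x Hx; apply: Hvar; rewrite leq_max Hx ?orbT.
- have [Ha Hb] := split_hyps a b n Hnt.
  by rewrite IHa ?IHb // => x Hx; apply: Hvar; rewrite leq_max Hx ?orbT.
Qed.

Lemma abstract_nonterminals C : wf C -> exists (sg : var -> option N) (D : mc),
  [/\ forall x A, sg x = Some A -> x.1 = rkN A, mground D, wf D & C = msubst sg D].
Proof.
move=> WC; pose m := (max_var_index C).+1.
pose sg (x : var) := if m <= x.2 then
  (if onth (nonterminals C) (x.2 - m) is Some A then
     (if x.1 == rkN A then Some A else None) else None) else None.
exists sg, (abstract C m); split.
- move=> x A; rewrite /sg; case: ifP => // _.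
  by case: onth => // B; case: eqP => // -> [->].
- exact: abstract_ground.
- exact: abstract_wf.
- symmetry; apply: msubst_abstract => [p A Hp | x Hx].
  + by rewrite /sg leq_addr addKn Hp eqxx.
  + by rewrite /sg leqNgt ltnS Hx.
Qed.

End Multicontexts.

Lemma mequiv_normalize (S : eqType) (N : Type) (rkN : N -> nat) (C : mc S N) :
  mwf rkN C -> mequiv rkN C (normalize rkN C).
Proof.
move=> WC; have [sg [D [sg_rk GD WD ->]]] := abstract_nonterminals WC.
exists sg, D, (normalize rkN D); do 2 split => //.
split; first by apply: (normalize_pred rkN (P := @mground S N)).
split=> //; split; first exact: (normalize_rk_wf WD).2.
split; first by move=> mu mu_ok; apply: normalize_meq.
by rewrite normalize_subst.
Qed.

Lemma normalize_correct (S : eqType) (N : Type) (rkN : N -> nat) k (C : mc S N) :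
  mwf rkN C -> messential rkN k C -> mcorrect rkN k (normalize rkN C).
Proof.
move=> WC [Ck LC]; have [Rn Wn] := normalize_rk_wf WC.
apply: normal_correct => //; first exact: normalize_normal.
- by apply: (normalize_pred rkN (P := leaves_lt rkN k)).
- by rewrite Rn ltnW.
Qed.

Theorem lemma2 (S : finType) (N : Type) (rkN : N -> nat) (k : nat) (C : mc S N) :
  mwf rkN C -> messential rkN k C ->
  exists C' : mc S N, mwf rkN C' /\ mcorrect rkN k C' /\ mequiv rkN C C'.
Proof.
move=> WC EC; exists (normalize rkN C); split; first exact: (normalize_rk_wf WC).2.
by split; [apply: normalize_correct | apply: mequiv_normalize].
Qed.
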